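(* Let $\mathrm V=(\mathscr V,\star)$ be a normal duoidal category and $\mathscr C$ a left $\mathscr V$-graded category. The assignment $(f,g,\varphi,\varphi')\mapsto(f_\ell,g_\ell,\varphi_r,\varphi'_r)$ is a bijection from the set of $\mathrm V$-graded squares in $\mathscr C$ onto the set of bigraded squares in the $(\mathscr V\times\mathscr V)$-graded category $\mathscr C_\star$.
   Context: $\mathscr V=(\mathscr V,\otimes,I,a,\ell,r)$ is a monoidal category. A normal duoidal category $\mathrm V=(\mathscr V,\star)$ consists of $\mathscr V$ together with a second monoidal structure $(\star,J,\alpha,\lambda,\rho)$ on the same category, natural interchange morphisms $\xi\colon(Y\otimes X)\star(Y'\otimes X')\to(Y\star Y')\otimes(X\star X')$ and morphisms $\mu\colon I\star I\to I$, $\nu\colon J\to I$, $\gamma\colon J\to J\otimes J$ satisfying the duoidal axioms (i.e. $\star$ and $J$ are opmonoidal functors for $\otimes$ with constraints $\xi,\mu$ and $\gamma,\nu$, and $\alpha,\lambda,\rho$ are opmonoidal transformations), with $\nu$ invertible; we assume $J=I$, $\nu=1_I$. Define $\sigma\colon X\star X'\to X\otimes X'$ as $(\rho\otimes\lambda)\circ\xi\circ(r^{-1}\star\ell^{-1})$ (through $(X\otimes I)\star(I\otimes X')$) and $\tau\colon X\star X'\to X'\otimes X$ as $(\lambda\otimes\rho)\circ\xi\circ(\ell^{-1}\star r^{-1})$ (through $(I\otimes X)\star(X'\otimes I)$). A left $\mathscr U$-graded category (for monoidal $\mathscr U$) has objects, sets $\mathscr C_X(A,B)$, reindexings $\alpha^*f$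 along $\alpha\colon Y\to X$, composites $g\circ f\in\mathscr C_{Y\otimes X}(A,C)$, identities $\mathsf i_A\in\mathscr C_I(A,A)$, with functorial reindexing, $\beta^*g\circ\alpha^*f=(\beta\otimes\alpha)^*(g\circ f)$, $(h\circ g)\circ f=a^*(h\circ(g\circ f))$, $f\circ\mathsf i_A=r_X^*f$, $\mathsf i_B\circ f=\ell_X^*f$. $\mathscr C_\star$ is the left $(\mathscr V\times\mathscr V)$-graded category (componentwise $\otimes$) with the same objects, $(\mathscr C_\star)_{(X,X')}(A,B)=\mathscr C_{X\star X'}(A,B)$, reindexing along $(\alpha,\beta)$ given by $(\alpha\star\beta)^*$, composite $g\circ_\star f:=\xi^*(g\circ f)$, identities $\mu^*(\mathsf i_A)$. For $f\in\mathscr C_X(A,B)$ set $f_\ell:=\rho^*(f)\in(\mathscr C_\star)_{(X,I)}(A,B)$ and $f_r:=\lambda^*(f)\in(\mathscr C_\star)_{(I,X)}(A,B)$. A $\mathrm V$-graded square in $\mathscr C$ is $(f,g,\varphi,\varphi')$ with $f\in\mathscr C_X(A,A')$, $g\in\mathscr C_X(B,B')$, $\varphi\in\mathscr C_{X'}(A,B)$, $\varphi'\in\mathscr C_{X'}(A',B')$ and $\sigma^*(g\circ\varphi)=\tau^*(\varphi'\circ f)$ in $\mathscr C_{X\star X'}(A,B')$. A bigraded square in a $(\mathscr V\times\mathscr V)$-graded category $\mathscr D$ is $(f,g,\varphi,\varphi')$ with $f\in\mathscr D_{(X,I)}(A,A')$, $g\in\mathscr D_{(X,I)}(B,B')$,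 $\varphi\in\mathscr D_{(I,X')}(A,B)$, $\varphi'\in\mathscr D_{(I,X')}(A',B')$ and $(r_X^{-1},\ell_{X'}^{-1})^*(g\circ\varphi)=(\ell_X^{-1},r_{X'}^{-1})^*(\varphi'\circ f)$ in $\mathscr D_{(X,X')}(A,B')$. *)

From mathcomp Require Import ssreflect ssrfun ssrbool.

Set Implicit Arguments.
Unset Strict Implicit.
Unset Printing Implicit Defensive.

Record Category := Category_ {
  ob :> Type;
  hom : ob -> ob -> Type;
  comp : forall a b c : ob, hom b c -> hom a b -> hom a c;
  idm : forall a : ob, hom a a;
  comp_assoc : forall a b c d (h : hom c d) (g : hom b c) (f : hom a b),
      comp h (comp g f) = comp (comp h g) f;
  comp_id_l : forall a b (f : hom a b), comp (idm b) f = f;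
  comp_id_r : forall a b (f : hom a b), comp f (idm a) = f }.

Arguments hom {C} : rename.
Arguments comp {C a b c} : rename.
Arguments idm {C} : rename.

Notation "g ∘ f" := (comp g f) (at level 40, left associativity).

Record MonoidalData (C : Category) := MonoidalData_ {
  unit_ob : C;
  tens : C -> C -> C;
  tensm : forall a b c d : C, hom a b -> hom c d -> hom (tens a c) (tens b d);
  assoc : forall x y z : C, hom (tens (tens x y) z) (tens x (tens y z));
  assoc_inv : forall x y z : C, hom (tens x (tens y z)) (tens (tens x y) z);
  lunit : forall x : C, hom (tens unit_ob x) x;
  lunit_inv : forall x : C, hom x (tens unit_ob x);
  runit : forall x : C, hom (tens x unit_ob) x;
  runit_inv : forall x : C, hom x (tens x unit_ob) }.

Arguments unit_ob {C}.
Arguments tens {C}.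
Arguments tensm {C} _ {a b c d}.
Arguments assoc {C}.
Arguments assoc_inv {C}.
Arguments lunit {C}.
Arguments lunit_inv {C}.
Arguments runit {C}.
Arguments runit_inv {C}.

Record MonoidalLaws (C : Category) (M : MonoidalData C) : Prop := {
  tensm_id : forall a c : C, tensm M (idm a) (idm c) = idm (tens M a c);
  tensm_comp : forall (a b e c d k : C) (g : hom b e) (g' : hom a b)
      (h : hom d k) (h' : hom c d),
      tensm M (g ∘ g') (h ∘ h') = tensm M g h ∘ tensm M g' h';
  assoc_iso1 : forall x y z, assoc_inv M x y z ∘ assoc M x y z = idm _;
  assoc_iso2 : forall x y z, assoc M x y z ∘ assoc_inv M x y z = idm _;
  assoc_nat : forall x x' y y' z z' (f : hom x x') (g : hom y y') (h : hom z z'),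
      assoc M x' y' z' ∘ tensm M (tensm M f g) h
      = tensm M f (tensm M g h) ∘ assoc M x y z;
  lunit_iso1 : forall x, lunit_inv M x ∘ lunit M x = idm _;
  lunit_iso2 : forall x, lunit M x ∘ lunit_inv M x = idm _;
  lunit_nat : forall x y (f : hom x y),
      f ∘ lunit M x = lunit M y ∘ tensm M (idm (unit_ob M)) f;
  runit_iso1 : forall x, runit_inv M x ∘ runit M x = idm _;
  runit_iso2 : forall x, runit M x ∘ runit_inv M x = idm _;
  runit_nat : forall x y (f : hom x y),
      f ∘ runit M x = runit M y ∘ tensm M f (idm (unit_ob M));
  pentagon : forall w x y z : C,
      assoc M w x (tens M y z) ∘ assoc M (tens M w x) y z
      = tensm M (idm w) (assoc M x y z) ∘ assoc M w (tens M x y) z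
        ∘ tensm M (assoc M w x y) (idm z);
  triangle : forall x y : C,
      tensm M (idm x) (lunit M y) ∘ assoc M x (unit_ob M) y
      = tensm M (runit M x) (idm y) }.

(* Normal duoidal categories, with the convention J = I and nu = 1_I    *)

Record NormalDuoidalData (C : Category) := NormalDuoidalData_ {
  dtens : MonoidalData C;
  star : C -> C -> C;
  starm : forall a b c d : C, hom a b -> hom c d -> hom (star a c) (star b d);
  salpha : forall x y z : C, hom (star (star x y) z) (star x (star y z));
  salpha_inv : forall x y z : C, hom (star x (star y z)) (star (star x y) z);
  slambda : forall x : C, hom (star (unit_ob dtens) x) x;
  slambda_inv : forall x : C, hom x (star (unit_ob dtens) x);
  srho : forall x : C, hom (star x (unit_ob dtens)) x;
  srho_inv : forall x : C, hom x (star x (unit_ob dtens));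
  xi : forall y x y' x' : C,
      hom (star (tens dtens y x) (tens dtens y' x'))
          (tens dtens (star y y') (star x x'));
  mu : hom (star (unit_ob dtens) (unit_ob dtens)) (unit_ob dtens);
  gamma : hom (unit_ob dtens) (tens dtens (unit_ob dtens) (unit_ob dtens)) }.

Arguments dtens {C}.
Arguments star {C}.
Arguments starm {C} _ {a b c d}.
Arguments salpha {C}.
Arguments salpha_inv {C}.
Arguments slambda {C}.
Arguments slambda_inv {C}.
Arguments srho {C}.
Arguments srho_inv {C}.
Arguments xi {C}.
Arguments mu {C}.
Arguments gamma {C}.

Definition star_mdata (C : Category) (D : NormalDuoidalData C) : MonoidalData C :=
  {| unit_ob := unit_ob (dtens D); tens := star D; tensm := @starm C D;
     assoc := salpha D; assoc_inv := salpha_inv D;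
     lunit := slambda D; lunit_inv := slambda_inv D;
     runit := srho D; runit_inv := srho_inv D |}.

Section DuoidalLaws.
Variables (C : Category) (D : NormalDuoidalData C).
Local Notation I := (unit_ob (dtens D)).
Local Notation "x ⊗ y" := (tens (dtens D) x y) (at level 40, left associativity).
Local Notation "x ⋆ y" := (star D x y) (at level 40, left associativity).
Local Notation "f ⊗m g" := (tensm (dtens D) f g) (at level 40, left associativity).
Local Notation "f ⋆m g" := (starm D f g) (at level 40, left associativity).
Local Notation a := (assoc (dtens D)).
Local Notation l := (lunit (dtens D)).
Local Notation r := (runit (dtens D)).

(* The duoidal axioms, with J = I and nu = 1_I substituted. *)
Record DuoidalLaws : Prop := {
  tens_monoidal : MonoidalLaws (dtens D);
  star_monoidal : MonoidalLaws (star_mdata D);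
  xi_nat : forall y y1 x x1 y' y1' x' x1'
      (f : hom y y1) (g : hom x x1) (f' : hom y' y1') (g' : hom x' x1'),
      xi D y1 x1 y1' x1' ∘ ((f ⊗m g) ⋆m (f' ⊗m g'))
      = ((f ⋆m f') ⊗m (g ⋆m g')) ∘ xi D y x y' x';
  (* ⋆ : V×V -> V is opmonoidal for ⊗ with constraints (xi, mu) *)
  xi_coassoc : forall A B C' D' E F : C,
      a (A ⋆ D') (B ⋆ E) (C' ⋆ F) ∘ (xi D A B D' E ⊗m idm (C' ⋆ F))
        ∘ xi D (A ⊗ B) C' (D' ⊗ E) F
      = (idm (A ⋆ D') ⊗m xi D B C' E F) ∘ xi D A (B ⊗ C') D' (E ⊗ F)
        ∘ (a A B C' ⋆m a D' E F);
  xi_counit_l : forall x y : C,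
      l (x ⋆ y) ∘ (mu D ⊗m idm (x ⋆ y)) ∘ xi D I x I y = l x ⋆m l y;
  xi_counit_r : forall x y : C,
      r (x ⋆ y) ∘ (idm (x ⋆ y) ⊗m mu D) ∘ xi D x I y I = r x ⋆m r y;
  (* J = I is opmonoidal (a comonoid) with constraints (gamma, nu = 1) *)
  gamma_coassoc : a I I I ∘ (gamma D ⊗m idm I) ∘ gamma D = (idm I ⊗m gamma D) ∘ gamma D;
  gamma_counit_l : l I ∘ (idm I ⊗m idm I) ∘ gamma D = idm I;
  gamma_counit_r : r I ∘ (idm I ⊗m idm I) ∘ gamma D = idm I;
  (* alpha is an opmonoidal transformation *)
  alpha_opmon : forall x x' y y' z z' : C,
      (salpha D x y z ⊗m salpha D x' y' z') ∘ xi D (x ⋆ y) (x' ⋆ y') z z'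
        ∘ (xi D x x' y y' ⋆m idm (z ⊗ z'))
      = xi D x x' (y ⋆ z) (y' ⋆ z') ∘ (idm (x ⊗ x') ⋆m xi D y y' z z')
        ∘ salpha D (x ⊗ x') (y ⊗ y') (z ⊗ z');
  alpha_opmon_unit : mu D ∘ (mu D ⋆m idm I) = mu D ∘ (idm I ⋆m mu D) ∘ salpha D I I I;
  (* lambda is an opmonoidal transformation *)
  lambda_opmon : forall x y : C,
      (slambda D x ⊗m slambda D y) ∘ xi D I I x y ∘ (gamma D ⋆m idm (x ⊗ y))
      = slambda D (x ⊗ y);
  lambda_opmon_unit : mu D ∘ (idm I ⋆m idm I) = slambda D I;
  (* rho is an opmonoidal transformation *)
  rho_opmon : forall x y : C,
      (srho D x ⊗m srho D y) ∘ xi D x y I I ∘ (idm (x ⊗ y) ⋆m gamma D)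
      = srho D (x ⊗ y);
  rho_opmon_unit : mu D ∘ (idm I ⋆m idm I) = srho D I }.

End DuoidalLaws.

Record NormalDuoidal := NormalDuoidal_ {
  dcat :> Category;
  ddata : NormalDuoidalData dcat;
  dlaws : DuoidalLaws ddata }.

(* Data of a left graded category over a "monoidal" grading given by an
   object type O, morphisms H, tensor T on objects and unit U. *)
Record GradedData (O : Type) (H : O -> O -> Type) (T : O -> O -> O) (U : O) :=
  GradedData_ {
  gob : Type;
  gh : O -> gob -> gob -> Type;
  greidx : forall X Y : O, H Y X -> forall A B : gob, gh X A B -> gh Y A B;
  gcomp : forall (Y X : O) (A B E : gob), gh Y B E -> gh X A B -> gh (T Y X) A E;
  gid : forall A : gob, gh U A A }.

Arguments gob {O H T U}.
Arguments gh {O H T U}.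
Arguments greidx {O H T U G X Y} _ {A B} _ : rename.
Arguments gcomp {O H T U G Y X A B E} _ _ : rename.
Arguments gid {O H T U} G A : rename.

Section GradedLaws.
Variables (C : Category) (M : MonoidalData C).

Record GradedLaws (G : GradedData (@hom C) (tens M) (unit_ob M)) : Prop := {
  reidx_id : forall X A B (f : gh G X A B), greidx (idm X) f = f;
  reidx_comp : forall X Y Z (al : hom Y X) (be : hom Z Y) A B (f : gh G X A B),
      greidx (al ∘ be) f = greidx be (greidx al f);
  reidx_gcomp : forall X X1 Y Y1 (al : hom X1 X) (be : hom Y1 Y) A B E
      (g : gh G Y B E) (f : gh G X A B),
      gcomp (greidx be g) (greidx al f) = greidx (tensm M be al) (gcomp g f);
  gcomp_assoc : forall Z Y X A B E F (h : gh G Z E F) (g : gh G Y B E) (f : gh G X A B),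
      gcomp (gcomp h g) f = greidx (assoc M Z Y X) (gcomp h (gcomp g f));
  gcomp_id_r : forall X A B (f : gh G X A B), gcomp f (gid G A) = greidx (runit M X) f;
  gcomp_id_l : forall X A B (f : gh G X A B), gcomp (gid G B) f = greidx (lunit M X) f }.

End GradedLaws.

Record GradedCat (C : Category) (M : MonoidalData C) := GradedCat_ {
  gdata :> GradedData (@hom C) (tens M) (unit_ob M);
  glaws : GradedLaws gdata }.

Definition PO (C : Category) : Type := (ob C * ob C)%type.
Definition PH (C : Category) (p q : PO C) : Type := (hom p.1 q.1 * hom p.2 q.2)%type.
Definition PT (C : Category) (M : MonoidalData C) (p q : PO C) : PO C :=
  (tens M p.1 q.1, tens M p.2 q.2).
Definition PU (C : Category) (M : MonoidalData C) : PO C := (unit_ob M, unit_ob M).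

Section Cstar.
Variables (V : NormalDuoidal).
Local Notation D := (ddata V).
Local Notation M := (dtens (ddata V)).

Definition Cstar (G : GradedCat M) : GradedData (@PH V) (PT M) (PU M) :=
  {| gob := gob G;
     gh := fun p A B => gh G (star D p.1 p.2) A B;
     greidx := fun X Y ab A B f => greidx (starm D ab.1 ab.2) f;
     gcomp := fun (Y X : PO V) A B E g f =>
       (greidx (xi D Y.1 X.1 Y.2 X.2) (gcomp g f)
         : gh G (star D (PT M Y X).1 (PT M Y X).2) A E);
     gid := fun A => (greidx (mu D) (gid G A)
                       : gh G (star D (PU M).1 (PU M).2) A A) |}.

Definition sigma (X X' : V) : hom (star D X X') (tens M X X') :=
  tensm M (srho D X) (slambda D X') ∘ xi D X (unit_ob M) (unit_ob M) X'
  ∘ starm D (runit_inv M X) (lunit_inv M X').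

Definition tau (X X' : V) : hom (star D X X') (tens M X' X) :=
  tensm M (slambda D X') (srho D X) ∘ xi D (unit_ob M) X X' (unit_ob M)
  ∘ starm D (lunit_inv M X) (runit_inv M X').

Record sq_idx (G : GradedCat M) := SqIdx {
  sX : ob V; sX' : ob V; sA : gob G; sA' : gob G; sB : gob G; sB' : gob G }.

Definition VQuad (G : GradedCat M) : Type :=
  { i : sq_idx G &
    (gh G (sX i) (sA i) (sA' i) * gh G (sX i) (sB i) (sB' i)
     * gh G (sX' i) (sA i) (sB i) * gh G (sX' i) (sA' i) (sB' i))%type }.

Definition is_VSquare (G : GradedCat M) (s : VQuad G) : Prop :=
  let '(f, g, phi, phi') := projT2 s in
  greidx (sigma (sX (projT1 s)) (sX' (projT1 s))) (gcomp g phi)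
  = greidx (tau (sX (projT1 s)) (sX' (projT1 s))) (gcomp phi' f).

Definition VSquares (G : GradedCat M) : Type := { s : VQuad G | is_VSquare s }.

End Cstar.

(* Bigraded squares in an arbitrary (V×V)-graded category (data suffices) *)
Section Bigraded.
Variables (C : Category) (M : MonoidalData C).
Variable (Dg : GradedData (@PH C) (PT M) (PU M)).
Local Notation I := (unit_ob M).

Record bsq_idx := BSqIdx {
  bX : ob C; bX' : ob C; bA : gob Dg; bA' : gob Dg; bB : gob Dg; bB' : gob Dg }.

Definition BQuad' : Type :=
  { i : bsq_idx &
    (gh Dg (bX i, I) (bA i) (bA' i) * gh Dg (bX i, I) (bB i) (bB' i)
     * gh Dg (I, bX' i) (bA i) (bB i) * gh Dg (I, bX' i) (bA' i) (bB' i))%type }.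

Definition is_BiSquare (s : BQuad') : Prop :=
  let '(f, g, phi, phi') := projT2 s in
  @greidx _ _ _ _ Dg (PT M (bX (projT1 s), I) (I, bX' (projT1 s)))
     (bX (projT1 s), bX' (projT1 s))
     (runit_inv M (bX (projT1 s)), lunit_inv M (bX' (projT1 s))) _ _ (gcomp g phi)
  = @greidx _ _ _ _ Dg (PT M (I, bX' (projT1 s)) (bX (projT1 s), I))
     (bX (projT1 s), bX' (projT1 s))
     (lunit_inv M (bX (projT1 s)), runit_inv M (bX' (projT1 s))) _ _ (gcomp phi' f).

Definition BiSquares : Type := { s : BQuad' | is_BiSquare s }.
End Bigraded.

Section Assignment.
Variables (V : NormalDuoidal) (G : GradedCat (dtens (ddata V))).
Local Notation D := (ddata V).
Local Notation M := (dtens (ddata V)).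
Local Notation I := (unit_ob M).

Definition f_ell (X : V) (A B : gob G) (f : gh G X A B) : gh (Cstar G) (X, I) A B :=
  greidx (srho D X) f.
Definition f_r (X : V) (A B : gob G) (f : gh G X A B) : gh (Cstar G) (I, X) A B :=
  greidx (slambda D X) f.

Definition assign (s : VQuad G) : BQuad' (Cstar G) :=
  match s with
  | existT i (f, g, phi, phi') =>
    existT _ (@BSqIdx _ _ (Cstar G) (sX i) (sX' i) (sA i) (sA' i) (sB i) (sB' i))
      (f_ell f, f_ell g, f_r phi, f_r phi')
  end.

End Assignment.

From mathcomp Require Import ssreflect ssrfun ssrbool.
From Stdlib Require Import ProofIrrelevance.

(* Since
   [σ] and [τ] factor through the interchange [ξ] as (ρ ⊗ λ) ∘ ξ ∘ (r⁻¹ ⋆ ℓ⁻¹)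
   and (λ ⊗ ρ) ∘ ξ ∘ (ℓ⁻¹ ⋆ r⁻¹), functoriality of reindexing and its
   compatibility with composition rewrite σ^*(g ∘ φ) into (r⁻¹, ℓ⁻¹)^*(g_ℓ ∘⋆ φ_r)
   and τ^*(φ' ∘ f) into (ℓ⁻¹, r⁻¹)^*(φ'_r ∘⋆ f_ℓ), so the two square conditions
   coincide.  The assignment is invertible because ρ and λ are. *)

Lemma exists_bijective_sig_map (A B : Type) (P : A -> Prop) (Q : B -> Prop)
    (f : A -> B) (g : B -> A) :
  cancel f g -> cancel g f -> (forall x, P x <-> Q (f x)) ->
  exists F : {x | P x} -> {y | Q y},
    (forall s, proj1_sig (F s) = f (proj1_sig s)) /\ bijective F.
Proof.
move=> fK gK PQ.
have Qg y : Q y -> P (g y) by move=> Qy; apply/PQ; rewrite gK.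
exists (fun s => exist Q (f (proj1_sig s)) (proj1 (PQ _) (proj2_sig s))).
split=> //; exists (fun t => exist P (g (proj1_sig t)) (Qg _ (proj2_sig t))).
- by case=> x Px; apply: eq_sig_hprop => [*|/=]; [exact: proof_irrelevance|].
- by case=> y Qy; apply: eq_sig_hprop => [*|/=]; [exact: proof_irrelevance|].
Qed.

Section GradedCatTheory.
Variables (C : Category) (M : MonoidalData C) (G : GradedCat M).
Local Notation L := (glaws G).

Lemma greidxK (X Y : C) (al : hom Y X) (be : hom X Y) A B (f : gh G X A B) :
  al ∘ be = idm X -> greidx be (greidx al f) = f.
Proof. by move=> albe; rewrite -(reidx_comp L) albe (reidx_id L). Qed.

Lemma greidx_tensm_gcomp (Y X Y1 X1 Z : C) (u : hom Y1 Y) (v : hom X1 X)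
    (w : hom Z (tens M Y1 X1)) A B E (g : gh G Y B E) (phi : gh G X A B) :
  greidx (tensm M u v ∘ w) (gcomp g phi)
  = greidx w (gcomp (greidx u g) (greidx v phi)).
Proof. by rewrite (reidx_comp L) (reidx_gcomp L). Qed.

End GradedCatTheory.

Section Squares.
Variables (V : NormalDuoidal) (G : GradedCat (dtens (ddata V))).
Local Notation D := (ddata V).
Local Notation M := (dtens (ddata V)).
Local Notation I := (unit_ob M).

Lemma greidx_sigma_gcomp (X X' : V) A B E (g : gh G X B E) (phi : gh G X' A B) :
  greidx (sigma X X') (gcomp g phi)
  = greidx (G := Cstar G) (X := PT M (X, I) (I, X')) (Y := (X, X'))
      (runit_inv M X, lunit_inv M X')
      (gcomp (f_ell g) (f_r phi)).
Proof. by rewrite /sigma (reidx_comp (glaws G)) greidx_tensm_gcomp. Qed.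

Lemma greidx_tau_gcomp (X X' : V) A B E (phi : gh G X' B E) (f : gh G X A B) :
  greidx (tau X X') (gcomp phi f)
  = greidx (G := Cstar G) (X := PT M (I, X') (X, I)) (Y := (X, X'))
      (lunit_inv M X, runit_inv M X')
      (gcomp (f_r phi) (f_ell f)).
Proof. by rewrite /tau (reidx_comp (glaws G)) greidx_tensm_gcomp. Qed.

Lemma is_VSquare_assign (s : VQuad G) : is_VSquare s <-> is_BiSquare (assign s).
Proof.
case: s => i [[[f g] phi] phi'].
by rewrite /is_VSquare /= greidx_sigma_gcomp greidx_tau_gcomp.
Qed.

Definition unassign (b : BQuad' (Cstar G)) : VQuad G :=
  let: existT i (f, g, phi, phi') := b in
  existT _ (@SqIdx V G (bX i) (bX' i) (bA i) (bA' i) (bB i) (bB' i))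
    (greidx (srho_inv D (bX i)) f, greidx (srho_inv D (bX i)) g,
     greidx (slambda_inv D (bX' i)) phi, greidx (slambda_inv D (bX' i)) phi').

Let SL := star_monoidal (dlaws V).

Lemma assignK : cancel (@assign V G) unassign.
Proof.
case=> -[X X' A A' B B'] [[[f g] phi] phi'] /=.
have rhoK := runit_iso2 SL X; have lambdaK := lunit_iso2 SL X'.
by rewrite /f_ell /f_r !greidxK.
Qed.

Lemma unassignK : cancel unassign (@assign V G).
Proof.
case=> -[X X' A A' B B'] [[[f g] phi] phi'] /=.
have rhoK := runit_iso1 SL X; have lambdaK := lunit_iso1 SL X'.
by rewrite /f_ell /f_r !greidxK.
Qed.

End Squares.

Theorem proposition13p4 (V : NormalDuoidal) (G : GradedCat (dtens (ddata V))) :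
  exists F : VSquares G -> BiSquares (Cstar G),
    (forall s : VSquares G, proj1_sig (F s) = assign (proj1_sig s)) /\ bijective F.
Proof.
exact: exists_bijective_sig_map
  (@assignK V G) (@unassignK V G) (@is_VSquare_assign V G).
Qed.
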